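(* Let $h\geq2$ and let $V\leq S_h$ be $2$-representable, i.e. $V=S(f)$ for some Boolean function $f:\{0,1\}^h\to\{0,1\}$. Then for every $n\geq2$, in $G=S_h\times S_n$ one has $O(V\times\{id\})=V\times\{id\}$.
   Context: For $\varphi\in S_h$ and $x\in\{0,1\}^h$, $x^\varphi=(x_{\varphi^{-1}(1)},\dots,x_{\varphi^{-1}(h)})$; the invariance group of $f:\{0,1\}^h\to\{0,1\}$ is $S(f)=\{\varphi\in S_h: f(x^\varphi)=f(x)\ \forall x\}$. Permutations compose as $(\sigma\tau)(x)=\sigma(\tau(x))$. Let $\mathcal{P}=(S_n)^h$ with $G=S_h\times S_n$ acting by $(p^{(\varphi,\psi)})_i=\psi\,p_{\varphi^{-1}(i)}$, and $p^U=\{p^g:g\in U\}$. $U\leq G$ is regular if for every $p$, $\{g\in U:p^g=p\}\subseteq S_h\times\{id\}$ (every subgroup of $S_h\times\{id\}$ is regular). For regular $U$, $\mathcal{A}(U)$ is the set of regular $W\leq G$ with $W\geq U$ and $p^W\subseteq p^U$ for all $p\in\mathcal{P}$, and $O(U)=\langle\mathcal{A}(U)\rangle$. *)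

From HB Require Import structures.
From mathcomp Require Import all_boot all_fingroup.
Set Implicit Arguments. Unset Strict Implicit. Unset Printing Implicit Defensive.
Local Open Scope group_scope.

Definition bvec (h : nat) := {ffun 'I_h -> bool}.
Definition bvec_perm h (x : bvec h) (phi : {perm 'I_h}) : bvec h :=
  [ffun i => x (phi^-1 i)].

Definition invgroup h (f : bvec h -> bool) : {set {perm 'I_h}} :=
  [set phi | [forall x, f (bvec_perm x phi) == f x]].

Definition two_representable h (V : {set {perm 'I_h}}) : Prop :=
  exists f : bvec h -> bool, V = invgroup f.

Definition Pt (h n : nat) := {ffun 'I_h -> {perm 'I_n}}.
Definition Gt (h n : nat) := ({perm 'I_h} * {perm 'I_n})%type.

(* (p^(phi,psi))_i = psi o p_{phi^-1(i)}; in mathcomp, (s * t) x = t (s x),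
   so psi o q is written q * psi. *)
Definition actP h n (p : Pt h n) (g : Gt h n) : Pt h n :=
  [ffun i => p (g.1^-1 i) * g.2].

Definition orbP h n (p : Pt h n) (U : {set Gt h n}) : {set Pt h n} :=
  [set actP p g | g in U].

Definition regular h n (U : {set Gt h n}) : bool :=
  [forall p : Pt h n, forall g in U, (actP p g == p) ==> (g.2 == 1)].

Definition inA h n (U W : {group Gt h n}) : bool :=
  [&& regular W, U \subset W & [forall p : Pt h n, orbP p W \subset orbP p U]].

Definition Oclos h n (U : {group Gt h n}) : {set Gt h n} :=
  << \bigcup_(W : {group Gt h n} | inA U W) (W : {set Gt h n}) >>.

From HB Require Import structures.
From mathcomp Require Import all_boot all_fingroup.
Local Open Scope group_scope.

(* Since V x 1 is regular it lies in A(V x 1), so it is contained in O(V x 1).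
   Conversely, let W be in A(V x 1) and (phi, psi) in W.  Acting on the
   constant configuration (1, ..., 1) shows psi = 1.  Fixing a permutation
   t <> 1 of 'I_n, encode x in {0,1}^h as the configuration with entry 1 where
   x is 1 and t where x is 0; this encoding is injective and equivariant, so
   the orbit inclusion gives, for every x, some v in V = S(f) with
   x^phi = x^v, whence f(x^phi) = f(x^v) = f(x) and phi is in S(f). *)

Section Orbits.

Variables h n : nat.

Lemma regular_setX1 (A : {set {perm 'I_h}}) : regular (setX A [1 {perm 'I_n}]).
Proof.
apply/forallP => p; apply/forall_inP => g.
by rewrite inE in_set1 => /andP[_ ->]; rewrite implybT.
Qed.

Lemma inA_refl (U : {group Gt h n}) : regular U -> inA U U.
Proof. by move=> regU; rewrite /inA regU subxx; apply/forallP. Qed.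

Lemma sub_Oclos (U : {group Gt h n}) : regular U -> U \subset Oclos U.
Proof.
move=> regU; apply: subset_trans (subset_gen _).
by apply: (bigcup_max U) => //; apply: inA_refl.
Qed.

Lemma Oclos_subG (U K : {group Gt h n}) :
  (forall W : {group Gt h n}, inA U W -> W \subset K) -> Oclos U \subset K.
Proof. by move=> sAK; rewrite gen_subG; apply/bigcupsP. Qed.

Lemma orbP_setX1P (A : {set {perm 'I_h}}) (p q : Pt h n) :
  reflect (exists2 v, v \in A & q = actP p (v, 1))
          (q \in orbP p (setX A [1 {perm 'I_n}])).
Proof.
apply: (iffP imsetP) => [[[v w]] | [v Av ->]]; last first.
  by exists (v, 1); rewrite // inE /= Av set11.
by rewrite inE /= in_set1 => /andP[Av /eqP ->] ->; exists v.
Qed.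

Lemma actP_cst (phi : {perm 'I_h}) (psi : {perm 'I_n}) :
  actP [ffun=> 1] (phi, psi) = [ffun=> psi].
Proof. by apply/ffunP => i; rewrite !ffunE mul1g. Qed.

Definition bconf (t : {perm 'I_n}) (x : bvec h) : Pt h n :=
  [ffun i => if x i then 1 else t].

Lemma actP_bconf (t : {perm 'I_n}) (x : bvec h) (phi : {perm 'I_h}) :
  actP (bconf t x) (phi, 1) = bconf t (bvec_perm x phi).
Proof. by apply/ffunP => i; rewrite !ffunE mulg1. Qed.

Lemma bconf_inj (t : {perm 'I_n}) : t != 1 -> injective (bconf t).
Proof.
move=> nt1 x y /ffunP exy; apply/ffunP => i.
move: (exy i); rewrite !ffunE.
by case: (x i); case: (y i) => // et; rewrite et ?eqxx in nt1.
Qed.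

Lemma exists_perm_neq1 : 1 < n -> exists t : {perm 'I_n}, t != 1.
Proof.
move=> n_gt1; pose a : 'I_n := Ordinal (ltnW n_gt1); pose b : 'I_n := Ordinal n_gt1.
exists (tperm a b); apply/eqP => /(congr1 (fun s : {perm 'I_n} => s a)).
by rewrite perm1 tpermL => /(congr1 val).
Qed.

Lemma orbP_sub_setX1_invgroup (f : bvec h -> bool) (W : {set Gt h n}) :
  0 < h -> 1 < n ->
  (forall p : Pt h n, orbP p W \subset orbP p (setX (invgroup f) [1])) ->
  W \subset setX (invgroup f) [1].
Proof.
move=> h_gt0 n_gt1 sWV; apply/subsetP => -[phi psi] Wg.
have orbit_witness p : exists2 v, v \in invgroup f & actP p (phi, psi) = actP p (v, 1).
  by apply/orbP_setX1P; apply: (subsetP (sWV p)); apply: imset_f.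
have psi1 : psi = 1.
  have [v _ /(congr1 (fun q : Pt h n => q (Ordinal h_gt0)))] := orbit_witness [ffun=> 1].
  by rewrite !actP_cst !ffunE.
subst psi; rewrite inE /= in_set1 eqxx andbT inE.
have [t nt1] := exists_perm_neq1 n_gt1.
apply/forallP => x; have [v] := orbit_witness (bconf t x).
rewrite inE !actP_bconf => /forallP fv /(bconf_inj t nt1) ->.
exact: fv.
Qed.

End Orbits.

Theorem mainTheorem17 (h n : nat) (V : {group {perm 'I_h}}) :
  2 <= h -> two_representable V -> 2 <= n ->
  Oclos (setX_group V [1 {perm 'I_n}]%G) = setX V [1 {perm 'I_n}].
Proof.
move=> h_ge2 [f defV] n_ge2.
apply/eqP; rewrite eqEsubset sub_Oclos ?regular_setX1 // andbT.
apply: Oclos_subG => W /and3P[_ _ /forallP sWV].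
rewrite /= defV; apply: orbP_sub_setX1_invgroup => //; first exact: ltnW.
by rewrite -defV.
Qed.
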